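(* Fix a cell $m^j$ of a discretized environment. Its semantic label takes values in $\mathcal{K}=\{0,1,\dots,K\}$, where $0$ means ''free''. Let $\mathbf{h}_{0,j}\in\mathbb{R}^{K+1}$ with $h^k_{0,j}=\log\frac{\mathbb{P}(m^j=k)}{\mathbb{P}(m^j=0)}$ be the prior log-odds vector, so $h^0_{0,j}=0$. For $t\ge 0$ let $$h^k_{t,j}=\log\frac{\mathbb{P}(m^j=k\mid \mathbf{x}_{1:t},\mathbf{P}_{1:t})}{\mathbb{P}(m^j=0\mid \mathbf{x}_{1:t},\mathbf{P}_{1:t})},\qquad k\in\mathcal{K},$$ and let $\mathbf{h}_{t,j}=[h^0_{t,j},\dots,h^K_{t,j}]^T$ be the log-odds vector at time $t$. Assume the following. - (Recurrent Bayesian update.) For every $k\in\mathcal{K}$, $$h^k_{t+1,j}=h^k_{t,j}+\log\frac{p(\mathbf{P}_{t+1}\mid m^j=k,\mathbf{x}_{t+1})}{p(\mathbf{P}_{t+1}\mid m^j=0,\mathbf{x}_{t+1})}.$$ This holds because $\mathbf{P}_{t+1}$ is conditionally independent of $\mathbf{P}_{1:t}$ given $m^j$. - (Independence of points.) The labeled points of the scan $\mathbf{P}_{t+1}=\{(\mathbf{p}_l,\mathbf{y}_l)\}_l$ are conditionally independent given $m^j$ and $\mathbf{x}_{t+1}$, i.e. $p(\mathbf{P}_{t+1}\mid m^j=k,\mathbf{x}_{t+1})=\prod_l p((\mathbf{p}_l,\mathbf{y}_l)\mid m^j=k,\mathbf{x}_{t+1})$. - (Inverse observation model.) For each labeled point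 $(\mathbf{p}_l,\mathbf{y}_l)$ and robot state $\mathbf{x}$, if $m^j$ lies on the ray from $\mathbf{x}$ to $\mathbf{p}_l$, then $$\mathbb{P}(m^j=k\mid \mathbf{x},(\mathbf{p}_l,\mathbf{y}_l))=\begin{cases}\sigma^k(\mathrm{diag}(\boldsymbol{\psi}_l)\mathbf{y}_l\,\delta p_l)&\text{if }\delta p_l\le\epsilon,\\ \sigma^k(\mathbf{h}_{0,j})&\text{if }\delta p_l>\epsilon.\end{cases}$$ Here $\delta p_l=d(m^j,\mathbf{x})-\|\mathbf{p}_l\|_2$. If $m^j$ does not lie on that ray, then $\mathbb{P}(m^j=k\mid \mathbf{x},(\mathbf{p}_l,\mathbf{y}_l))=\sigma^k(\mathbf{h}_{0,j})$. Then the log-odds satisfy $$\mathbf{h}_{t+1,j}=\mathbf{h}_{t,j}+\sum_{(\mathbf{p}_l,\mathbf{y}_l)\in\mathbf{P}_{t+1}}\big[\mathbf{g}_j(\mathbf{x}_{t+1},(\mathbf{p}_l,\mathbf{y}_l))-\mathbf{h}_{0,j}\big],$$ where, for cells on the ray from $\mathbf{x}_{t+1}$ to $\mathbf{p}_l$, $$\mathbf{g}_j(\mathbf{x}_{t+1},(\mathbf{p}_l,\mathbf{y}_l))=\begin{cases}\mathrm{diag}(\boldsymbol{\psi}_l)\mathbf{y}_l\,\delta p_l&\text{if }\delta p_l\le\epsilon,\\ \mathbf{h}_{0,j}&\text{if }\delta p_l>\epsilon,\end{cases}$$ and $\mathbf{g}_j=\mathbf{h}_{0,j}$ for cells not on that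 ray.
   Context: Semantic mapping setting. The environment is discretized into $J$ cells $m^1,\dots,m^J$, each with a random semantic label in $\mathcal{K}=\{0,\dots,K\}$. The robot has states $\mathbf{x}_1,\mathbf{x}_2,\dots$. At each step $t$ it observes a labeled point cloud $\mathbf{P}_t=\{(\mathbf{p}_l,\mathbf{y}_l)\}_l$. Each $\mathbf{p}_l$ is a measured location. Each $\mathbf{y}_l\in\mathbb{R}^{K+1}$ is a semantic likelihood vector supported on classes $1,\dots,K$: $y^0_l=0$, $y^k_l\ge 0$, $\sum_{k=1}^K y_l^k=1$. $d(\mathbf{x},m^j)$ is the distance from the robot position to the center of mass of cell $m^j$. $\epsilon>0$ is a truncation threshold. $\boldsymbol{\psi}_l\in\mathbb{R}^{K+1}$ are model parameters, and $\mathrm{diag}(\cdot)$ forms a diagonal matrix from a vector. $\sigma:\mathbb{R}^{K+1}\to\mathbb{R}^{K+1}$ is the softmax, $\sigma^k(\mathbf{z})=\exp(z^k)/\sum_{k'\in\mathcal{K}}\exp(z^{k'})$. It satisfies $\log(\sigma^k(\mathbf{z})/\sigma^{k'}(\mathbf{z}))=z^k-z^{k'}$. The posterior is recovered as $\mathbb{P}(m^j=k\mid\mathbf{x}_{1:t},\mathbf{P}_{1:t})=\sigma^k(\mathbf{h}_{t,j})$. *)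

From HB Require Import structures.
From mathcomp Require Import all_boot all_order all_algebra.
From mathcomp Require Import all_classical all_reals all_analysis.
Set Implicit Arguments. Unset Strict Implicit. Unset Printing Implicit Defensive.
Import Order.TTheory GRing.Theory Num.Theory.
Local Open Scope ring_scope.

Section Defs.
Variable R : realType.

(* softmax sigma : R^{K+1} -> R^{K+1}, vectors are column vectors 'cV_(K+1),
   class index k : 'I_(K.+1) (class 0 = free). *)
Definition softmax (K : nat) (z : 'cV[R]_(K.+1)) (k : 'I_(K.+1)) : R :=
  expR (z k 0) / \sum_(k' < K.+1) expR (z k' 0).

Definition norm2 (n : nat) (a : 'cV[R]_n) : R :=
  Num.sqrt (\sum_(i < n) (a i 0) ^+ 2).

Definition diagv (K : nat) (psi : 'cV[R]_(K.+1)) : 'M[R]_(K.+1) := diag_mx psi^T.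

Definition prior_logodds (K : nat) (prior : 'I_(K.+1) -> R) : 'cV[R]_(K.+1) :=
  \col_k ln (prior k / prior ord0).

(* Bayes' rule: P(m^j = k | x, z) from the observation likelihood
   lik x z k = p(z | m^j = k, x) and the prior P(m^j = k | x) = P(m^j = k). *)
Definition posterior (X Z : Type) (K : nat) (prior : 'I_(K.+1) -> R)
    (lik : X -> Z -> 'I_(K.+1) -> R) (x : X) (z : Z) (k : 'I_(K.+1)) : R :=
  lik x z k * prior k / \sum_(k' < K.+1) lik x z k' * prior k'.

(* delta p_l = d(m^j, x) - ||p_l||_2, d = distance between robot position and
   the center of mass of the cell *)
Definition deltap (X : Type) (n : nat) (pos : X -> 'cV[R]_n) (center : 'cV[R]_n)
    (x : X) (p : 'cV[R]_n) : R :=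
  norm2 (pos x - center) - norm2 p.

Definition inv_obs_model (X : Type) (n K : nat) (pos : X -> 'cV[R]_n)
    (center : 'cV[R]_n) (onray : X -> 'cV[R]_n -> bool) (eps : R)
    (h0 : 'cV[R]_(K.+1)) (psi : 'cV[R]_(K.+1)) (x : X)
    (z : 'cV[R]_n * 'cV[R]_(K.+1)) (k : 'I_(K.+1)) : R :=
  if onray x z.1 then
    (if deltap pos center x z.1 <= eps
     then softmax (deltap pos center x z.1 *: (diagv psi *m z.2)) k
     else softmax h0 k)
  else softmax h0 k.

Definition gvec (X : Type) (n K : nat) (pos : X -> 'cV[R]_n)
    (center : 'cV[R]_n) (onray : X -> 'cV[R]_n -> bool) (eps : R)
    (h0 : 'cV[R]_(K.+1)) (psi : 'cV[R]_(K.+1)) (x : X)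
    (z : 'cV[R]_n * 'cV[R]_(K.+1)) : 'cV[R]_(K.+1) :=
  if onray x z.1 then
    (if deltap pos center x z.1 <= eps
     then deltap pos center x z.1 *: (diagv psi *m z.2)
     else h0)
  else h0.

End Defs.

From HB Require Import structures.
From mathcomp Require Import all_boot all_order all_algebra.
From mathcomp Require Import all_classical all_reals all_analysis.
From mathcomp Require Import ring.
Set Implicit Arguments.
Unset Strict Implicit.
Unset Printing Implicit Defensive.
Import Order.TTheory GRing.Theory Num.Theory.
Local Open Scope ring_scope.

(* By conditional independence the log-likelihood ratio of a scan is the sum of
   the log-likelihood ratios of its points.  Bayes' rule expresses the
   likelihood ratio of one point as the ratio of its posterior odds to its
   prior odds; the inverse observation model says that the posterior is the
   softmax of g_j, whose log-odds against the free class are g_j itself, and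
   the prior log-odds are h_{0,j}.  Hence each point contributes g_j - h_{0,j}. *)

Lemma ln_prod (R : realType) (I : Type) (r : seq I) (P : pred I) (F : I -> R) :
  (forall i, P i -> 0 < F i) ->
  ln (\prod_(i <- r | P i) F i) = \sum_(i <- r | P i) ln (F i).
Proof.
move=> F_gt0; apply: (@big_morph_in _ _ Num.pos) => //.
- by move=> x y x_gt0 y_gt0; rewrite rpredM.
- exact: rpred1.
- exact: lnM.
- exact: ln1.
Qed.

Section LogOdds.
Variables (R : realType) (K : nat).

Lemma softmax_ratio (z : 'cV[R]_(K.+1)) (k k' : 'I_(K.+1)) :
  softmax z k / softmax z k' = expR (z k 0 - z k' 0).
Proof.
have S_gt0 : 0 < \sum_(i < K.+1) expR (z i 0).
  by rewrite (bigD1 ord0) //= ltr_pwDl ?expR_gt0 // sumr_ge0.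
rewrite /softmax expRB; field.
by rewrite !gt_eqF ?expR_gt0.
Qed.

Lemma ln_softmax_ratio (z : 'cV[R]_(K.+1)) (k k' : 'I_(K.+1)) :
  ln (softmax z k / softmax z k') = z k 0 - z k' 0.
Proof. by rewrite softmax_ratio expRK. Qed.

Variables (X Z : Type) (prior : 'I_(K.+1) -> R) (lik : X -> Z -> 'I_(K.+1) -> R).
Hypothesis prior_gt0 : forall k, 0 < prior k.
Hypothesis lik_gt0 : forall x z k, 0 < lik x z k.

Lemma posterior_ratio (x : X) (z : Z) (k k' : 'I_(K.+1)) :
  posterior prior lik x z k / posterior prior lik x z k'
  = lik x z k / lik x z k' * (prior k / prior k').
Proof.
have S_gt0 : 0 < \sum_(i < K.+1) lik x z i * prior i.
  rewrite (bigD1 ord0) //= ltr_pwDl ?mulr_gt0 // sumr_ge0 // => i _.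
  by rewrite mulr_ge0 // ltW.
rewrite /posterior; field.
by rewrite !gt_eqF.
Qed.

Lemma ln_lik_ratio_softmax (x : X) (z : Z) (g : 'cV[R]_(K.+1)) :
  posterior prior lik x z =1 softmax g ->
  forall k k', ln (lik x z k / lik x z k')
               = g k 0 - g k' 0 - ln (prior k / prior k').
Proof.
move=> post_g k k'.
rewrite -(ln_softmax_ratio g k k') -!post_g posterior_ratio.
by rewrite [ln (_ / _ * _)]lnM ?addrK // posrE divr_gt0.
Qed.

Lemma prior_logodds_free : prior_logodds prior ord0 0 = 0.
Proof. by rewrite mxE divff ?ln1 // gt_eqF. Qed.

End LogOdds.

Section InverseObservationModel.
Variables (R : realType) (X : Type) (n K : nat) (pos : X -> 'cV[R]_n).
Variables (center : 'cV[R]_n) (onray : X -> 'cV[R]_n -> bool) (eps : R).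
Variables (h0 psi : 'cV[R]_(K.+1)) (x : X) (z : 'cV[R]_n * 'cV[R]_(K.+1)).

Lemma inv_obs_modelE :
  inv_obs_model pos center onray eps h0 psi x z
  =1 softmax (gvec pos center onray eps h0 psi x z).
Proof. by move=> k; rewrite /inv_obs_model /gvec; case: ifP => // _; case: ifP. Qed.

Lemma gvec_free :
  h0 ord0 0 = 0 -> z.2 ord0 0 = 0 ->
  gvec pos center onray eps h0 psi x z ord0 0 = 0.
Proof.
move=> h00 y0; rewrite /gvec; case: ifP => // _; case: ifP => // _.
by rewrite /diagv mul_diag_mx !mxE y0 !mulr0.
Qed.

End InverseObservationModel.

Theorem proposition1
  (R : realType) (K n : nat) (X : Type)
  (* robot states x_1, x_2, ... and labeled scans P_1, P_2, ... (index 0 unused) *)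
  (xs : nat -> X)
  (scan : nat -> seq ('cV[R]_n * 'cV[R]_(K.+1)))
  (* model parameters psi_l of the l-th point of scan t *)
  (psi : nat -> nat -> 'cV[R]_(K.+1))
  (* geometry: robot position, center of mass of cell m^j, ray predicate, threshold *)
  (pos : X -> 'cV[R]_n) (center : 'cV[R]_n)
  (onray : X -> 'cV[R]_n -> bool) (eps : R) (heps : 0 < eps)
  (* prior P(m^j = k) *)
  (prior : 'I_(K.+1) -> R)
  (hprior_pos : forall k, 0 < prior k)
  (hprior_sum : \sum_(k < K.+1) prior k = 1)
  (* point likelihood p((p,y) | m^j = k, x) and scan likelihood p(P | m^j = k, x) *)
  (lik : X -> ('cV[R]_n * 'cV[R]_(K.+1)) -> 'I_(K.+1) -> R)
  (hlik_pos : forall x z k, 0 < lik x z k)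
  (scanlik : X -> seq ('cV[R]_n * 'cV[R]_(K.+1)) -> 'I_(K.+1) -> R)
  (* log-odds vectors h_{t,j} *)
  (h : nat -> 'cV[R]_(K.+1))
  (* semantic likelihood vectors: y^0 = 0, y^k >= 0, sum_{k>=1} y^k = 1 *)
  (hy : forall t z, z \in scan t ->
        z.2 ord0 0 = 0 /\ (forall k, 0 <= z.2 k 0) /\
        \sum_(k < K.+1 | k != ord0) z.2 k 0 = 1)
  (* h_{0,j} is the prior log-odds vector *)
  (hh0 : h 0%N = prior_logodds prior)
  (* recurrent Bayesian update *)
  (hrec : forall (t : nat) (k : 'I_(K.+1)),
      h t.+1 k 0 = h t k 0 + ln (scanlik (xs t.+1) (scan t.+1) k
                                 / scanlik (xs t.+1) (scan t.+1) ord0))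
  (* conditional independence of the points of a scan *)
  (hindep : forall (t : nat) (k : 'I_(K.+1)),
      scanlik (xs t.+1) (scan t.+1) k
      = \prod_(z <- scan t.+1) lik (xs t.+1) z k)
  (* inverse observation model *)
  (hinv : forall (t i : nat) (k : 'I_(K.+1)), (i < size (scan t.+1))%N ->
      posterior prior lik (xs t.+1) (nth (0, 0) (scan t.+1) i) k
      = inv_obs_model pos center onray eps (h 0%N) (psi t.+1 i) (xs t.+1)
                      (nth (0, 0) (scan t.+1) i) k) :
  forall t : nat,
    h t.+1 = h t + \sum_(i < size (scan t.+1))
                     (gvec pos center onray eps (h 0%N) (psi t.+1 i) (xs t.+1)
                           (nth (0, 0) (scan t.+1) i) - h 0%N).
Proof.
move=> t; apply/matrixP => k j; rewrite (ord1 j) !mxE summxE hrec !hindep.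
rewrite -prodf_div ln_prod => [|z _]; last by rewrite divr_gt0.
congr (_ + _); rewrite (big_nth (0, 0)) big_mkord; apply: eq_bigr => i _.
set z := nth (0, 0) (scan t.+1) i.
have [y0 _] := hy _ _ (mem_nth (0, 0) (ltn_ord i)).
have h00 : h 0%N ord0 0 = 0 by rewrite hh0 prior_logodds_free.
have post_g : posterior prior lik (xs t.+1) z
              =1 softmax (gvec pos center onray eps (h 0%N) (psi t.+1 i) (xs t.+1) z).
  by move=> k'; rewrite hinv // inv_obs_modelE.
rewrite !mxE (ln_lik_ratio_softmax hprior_pos hlik_pos post_g) gvec_free //.
by rewrite subr0 hh0 mxE.
Qed.
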